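(* Let $n_1<n_2$ be positive integers with $\gcd(n_1,n_2)=1$, and let $N=2(n_1+n_2)$. Then $C(n_1,n_2,n_1+n_2)$ is a circle of $n_1+n_2$ tetrahedra boundaries. Explicitly, for each $a\in\mathbb{Z}/N$ the edge (tritone) $\{a,a+n_1+n_2\}$ lies in exactly four 2-simplices, which are contained in exactly the two tetrahedron boundaries on the vertex sets $\{a,a+n_1,a+n_1+n_2,a+2n_1+n_2\}$ and $\{a,a+n_2,a+n_1+n_2,a+n_1+2n_2\}$; these two tetrahedron boundaries intersect exactly in that edge, every 2-simplex lies in exactly one such tetrahedron boundary, and these tetrahedron boundaries are linked cyclically, each sharing opposite edges with its two neighbours.
   Context: For positive integers $n_1\le n_2\le n_3$ with $N=n_1+n_2+n_3$, $C(n_1,n_2,n_3)$ denotes the abstract simplicial complex whose vertex set is $\mathbb{Z}/N$, whose 2-simplices are all sets of the form $\{k,k+n_1,k+n_1+n_2\}$ or $\{k,k-n_1,k-n_1-n_2\}$ for $k\in\mathbb{Z}/N$, and whose 1-simplices are all sets $\{k,k+n_i\}$ with $k\in\mathbb{Z}/N$, $i\in\{1,2,3\}$. A tetrahedron boundary is the simplicial complex of all nonempty subsets of size at most 3 of a 4-element set. A circle of $m\ge 3$ tetrahedra boundaries is a simplicial complex that is a union of $m$ tetrahedron boundaries $T_0,\dots,T_{m-1}$ (indices mod $m$) such that $T_i\cap T_{i+1}$ is a single edge (with its vertices), the two edges $T_i\cap T_{i-1}$ and $T_i\cap T_{i+1}$ are opposite (disjoint) edges of $T_i$, and non-consecutive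 $T_i,T_j$ are disjoint. *)

From mathcomp Require Import all_boot.
Set Implicit Arguments. Unset Strict Implicit. Unset Printing Implicit Defensive.

Lemma ord_pos_subproof N (i : 'I_N) : 0 < N.
Proof. exact: leq_ltn_trans (leq0n i) (ltn_ord i). Qed.

(* i + k in Z/N, with Z/N represented by 'I_N *)
Definition shift N (k : nat) (i : 'I_N) : 'I_N :=
  Ordinal (ltn_pmod (i + k) (ord_pos_subproof i)).

Definition unshift N (k : nat) (i : 'I_N) : 'I_N := shift (N - k %% N) i.

(* The abstract simplicial complex C(n1,n2,n3) on Z/N, N = n1+n2+n3,
   given as its set of faces (vertices, edges, triangles). *)
Definition Cplx (n1 n2 n3 : nat) : {set {set 'I_(n1 + n2 + n3)}} :=
  [set F | [|| [exists k, F == [set k]],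
              [exists k, [|| F == [set k; shift n1 k],
                             F == [set k; shift n2 k] |
                             F == [set k; shift n3 k]]] |
              [exists k, (F == [set k; shift n1 k; shift (n1 + n2) k])
                       || (F == [set k; unshift n1 k; unshift (n1 + n2) k])]]].

Definition tetb (T : finType) (W : {set T}) : {set {set T}} :=
  [set F : {set T} | (F \subset W) && (0 < #|F| <= 3)].

Definition edgecx (T : finType) (e : {set T}) : {set {set T}} :=
  [set F : {set T} | (F != set0) && (F \subset e)].

Definition is_tetb_circle (T : finType) (K : {set {set T}}) (m : nat)
    (TT : 'I_m -> {set T}) : Prop :=
  [/\ 3 <= m,
      forall i, #|TT i| = 4 &
      K = \bigcup_(i < m) tetb (TT i)] /\
  [/\ forall i, (exists2 e : {set T}, #|e| = 2 &
                  tetb (TT i) :&: tetb (TT (ordS i)) = edgecx e),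
      forall i, (TT (ord_pred i) :&: TT i) :&: (TT i :&: TT (ordS i)) = set0
    & forall i j, i != j -> j != ordS i -> i != ordS j ->
                  tetb (TT i) :&: tetb (TT j) = set0].

Definition circle_of_tetb (T : finType) (K : {set {set T}}) (m : nat) : Prop :=
  exists TT : 'I_m -> {set T}, @is_tetb_circle T K m TT.

From mathcomp Require Import all_boot zify.
Set Implicit Arguments. Unset Strict Implicit. Unset Printing Implicit Defensive.

(* Put M = n1 + n2, so the vertex set is Z/2M.  Reduction mod M is two-to-one and
   its fibres are the tritones {x, x + M}.  The simplices of C(n1, n2, M) are
   exactly the nonempty sets of at most three vertices inside some
   tet a = {a, a + n1, a + M, a + n1 + M}, the union of the fibres over the
   residues of a and a + n1.  As n1 is coprime to M, the residues i * n1 (i in Z/M)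
   exhaust Z/M, so these tetrahedra form a cycle indexed by i: consecutive ones
   share one fibre, i.e. one tritone edge, and the others are disjoint. *)

Lemma modn_lt_double t m : t < m + m -> t %% m = if t < m then t else t - m.
Proof.
move=> tlt; case: ifP => [/modn_small //|/negbT]; rewrite -leqNgt => mle.
by rewrite -{1}(subnK mle) modnDr modn_small //; lia.
Qed.

Lemma ordS_neq m (i : 'I_m) : 1 < m -> ordS i != i.
Proof.
move=> m1; rewrite -val_eqE /= modn_lt_double; last by have := ltn_ord i; lia.
by case: ifP => ?; apply/eqP; have := ltn_ord i; lia.
Qed.

Lemma ordSS_neq m (i : 'I_m) : 2 < m -> ordS (ordS i) != i.
Proof.
move=> m2; have ilt := ltn_ord i; rewrite -val_eqE /=.
rewrite [i.+1 %% m]modn_lt_double; last lia.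
by case: ifP => ?; (rewrite modn_lt_double; last lia); case: ifP => ?; apply/eqP; lia.
Qed.

Lemma eqmod_double t s m : t < m + m -> s < m + m ->
  (t == s %[mod m]) = [|| t == s, t == s + m | s == t + m].
Proof. by move=> tlt slt; rewrite !modn_lt_double //; do !case: ifP => ?; lia. Qed.

Section TetrahedronBoundary.
Variable T : finType.
Implicit Types (A B W F : {set T}) (x y w z : T).

Lemma card_set3 x y w : uniq [:: x; y; w] -> #|[set x; y; w]| = 3.
Proof.
move=> u; rewrite -[3]/(size [:: x; y; w]) -(card_uniqP u).
by apply: eq_card => t; rewrite !inE -orbA.
Qed.

Lemma card_set4 x y w z : uniq [:: x; y; w; z] -> #|[set x; y; w; z]| = 4.
Proof.
move=> u; rewrite -[4]/(size [:: x; y; w; z]) -(card_uniqP u).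
by apply: eq_card => t; rewrite !inE -!orbA.
Qed.

Lemma tetbI A B : #|A :&: B| <= 3 -> tetb A :&: tetb B = edgecx (A :&: B).
Proof.
move=> AB3; apply/setP => F; rewrite !inE subsetI card_gt0.
case: (boolP (F \subset A)) => FA; case: (boolP (F \subset B)) => FB;
  rewrite ?andbF ?andbT //=.
have FAB : #|F| <= #|A :&: B| by apply: subset_leq_card; rewrite subsetI FA.
by rewrite (leq_trans FAB AB3); case: (F != set0).
Qed.

Lemma tetbI_set0 A B : A :&: B = set0 -> tetb A :&: tetb B = set0.
Proof.
move=> AB0; rewrite tetbI AB0 ?cards0 //.
by apply/setP => F; rewrite !inE subset0 andNb.
Qed.

Lemma subset_card3 W F : #|W| = 4 -> F \subset W -> #|F| = 3 ->
  exists2 z, z \in W & F = W :\ z.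
Proof.
move=> W4 FW F3.
have /subsetPn [z zW zF] : ~~ (W \subset F).
  by apply/negP => /subset_leq_card; rewrite W4 F3.
exists z => //; apply/eqP; rewrite eqEcard subsetD1 FW zF F3.
by have := cardsD1 z W; rewrite zW W4; lia.
Qed.

Lemma setD1_eq_set3 W z x y w : #|W| = 4 -> z \in W ->
  [set x; y; w] \subset W :\ z -> #|[set x; y; w]| = 3 -> W :\ z = [set x; y; w].
Proof.
move=> W4 zW sub xyw3; apply/eqP; rewrite eq_sym eqEcard sub xyw3.
by have := cardsD1 z W; rewrite zW W4; lia.
Qed.

End TetrahedronBoundary.

Section Translation.
Variable N : nat.
Implicit Types (a : 'I_N) (k l : nat).

Lemma shiftD k l a : shift k (shift l a) = shift (l + k) a.
Proof. by apply: val_inj; rewrite /= modnDml addnA. Qed.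

Lemma shift_eqmod k l a : k = l %[mod N] -> shift k a = shift l a.
Proof. by move=> klN; apply: val_inj; rewrite /= -modnDmr klN modnDmr. Qed.

Lemma shift0 a : shift 0 a = a.
Proof. by apply: val_inj; rewrite /= addn0 modn_small. Qed.

Lemma eq_shift k l a : (shift k a == shift l a) = (k == l %[mod N]).
Proof. by rewrite -val_eqE /= eqn_modDl. Qed.

Lemma eq_shiftl k a : (shift k a == a) = (k == 0 %[mod N]).
Proof. by rewrite -{2}[a]shift0 eq_shift. Qed.

Lemma eq_shiftr k a : (a == shift k a) = (0 == k %[mod N]).
Proof. by rewrite -{1}[a]shift0 eq_shift. Qed.

End Translation.

Section Fibres.
Variable M : nat.
Implicit Types (a x y : 'I_(M + M)) (c d k : nat).

Definition fibre c : {set 'I_(M + M)} := [set x : 'I_(M + M) | x %% M == c].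

Lemma shift_modM k x : shift k x %% M = (x + k) %% M.
Proof. by rewrite /= modn_dvdm // dvdn_addl. Qed.

Lemma eq_modM x y : (x %% M == y %% M) = (x == y) || (x == shift M y).
Proof.
have := ltn_ord x; have := ltn_ord y; rewrite -!val_eqE /= => ylt xlt.
rewrite !modn_lt_double //; last lia.
by do !case: ifP => ?; lia.
Qed.

Lemma fibreE a : fibre (a %% M) = [set a; shift M a].
Proof. by apply/setP => x; rewrite !inE eq_modM. Qed.

Lemma card_fibre c : c < M -> #|fibre c| = 2.
Proof.
move=> cM; have cN : c < M + M by apply: ltn_addr.
rewrite -[c](@modn_small c M) // -[c in c %% M]/(val (Ordinal cN)) fibreE cards2.
by rewrite -val_eqE /= modn_lt_double; [case: ifP => ?|]; lia.
Qed.

Lemma fibreI c d : c != d -> fibre c :&: fibre d = set0.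
Proof.
move=> cd; apply/setP => x; rewrite !inE.
by apply/negP => /andP [/eqP -> /eqP dc]; rewrite dc eqxx in cd.
Qed.

End Fibres.

Section Complex.
Variables n1 n2 : nat.
Hypotheses (n1_gt0 : 0 < n1) (n1_lt_n2 : n1 < n2).
Local Notation M := (n1 + n2).
Local Notation K := (Cplx n1 n2 (n1 + n2)).
Implicit Types (i j : 'I_M) (a k u v : 'I_(M + M)) (F : {set 'I_(M + M)}).

Lemma unshift_n1 u : unshift n1 u = shift (n2 + M) u.
Proof. by rewrite /unshift modn_small; [apply: shift_eqmod; congr (_ %% _)|]; lia. Qed.

Lemma unshift_M u : unshift M u = shift M u.
Proof. by rewrite /unshift modn_small ?addnK //; lia. Qed.

(* Decides (in)equalities between shifts of a single vertex: they reduce to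
   congruences mod 2M between small linear combinations of n1 and n2. *)
Ltac shift_lia :=
  rewrite ?unshift_n1 ?unshift_M ?shiftD ?eq_shift ?eq_shiftl ?eq_shiftr
          ?eqmod_double ?eqxx; lia.

Definition tet a := [set a; shift n1 a; shift (n1 + n2) a; shift (n1 + n1 + n2) a].

Ltac tet_lia :=
  rewrite /tet ?inE ?subUset ?sub1set ?cards1 ?cards2 ?card_set3 ?card_set4 /= ?inE;
  shift_lia.

Lemma card_tet a : #|tet a| = 4.
Proof. tet_lia. Qed.

Lemma edge_Cplx u v :
  [|| v == shift n1 u, v == shift n2 u | v == shift M u] -> [set u; v] \in K.
Proof.
move=> uv; rewrite inE; apply/or3P/Or32/existsP; exists u.
by case/or3P: uv => /eqP ->; rewrite eqxx ?orbT.
Qed.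

Lemma tet_edge_Cplx a u v : u \in tet a -> v \in tet a -> u != v -> [set u; v] \in K.
Proof.
move=> ua va; rewrite /tet !inE -!orbA in ua va.
case/or4P: ua => /eqP ->; case/or4P: va => /eqP ->; rewrite ?eqxx // => _;
  first [apply: edge_Cplx; shift_lia | rewrite setUC; apply: edge_Cplx; shift_lia].
Qed.

Lemma up_Cplx k : [set k; shift n1 k; shift M k] \in K.
Proof. by rewrite inE; apply/or3P/Or33/existsP; exists k; rewrite eqxx. Qed.

Lemma down_Cplx k : [set k; unshift n1 k; unshift M k] \in K.
Proof. by rewrite inE; apply/or3P/Or33/existsP; exists k; rewrite eqxx orbT. Qed.

(* Removing a vertex from tet a leaves an up-triangle {k, k + n1, k + M} or a
   down-triangle {k, k - n1, k - M}. *)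
Lemma tet_triangle_Cplx a F : F \subset tet a -> #|F| = 3 -> F \in K.
Proof.
move=> Fa F3; have [z za ->] := subset_card3 (card_tet a) Fa F3.
have zE := za; rewrite /tet !inE -!orbA in zE.
case/or4P: zE => /eqP zE; subst z.
- rewrite (@setD1_eq_set3 _ _ _ (shift (n1 + n1 + n2) a) (unshift n1 (shift (n1 + n1 + n2) a))
      (unshift M (shift (n1 + n1 + n2) a)) (card_tet a) za) ?down_Cplx //; tet_lia.
- rewrite (@setD1_eq_set3 _ _ _ (shift M a) (shift n1 (shift M a)) (shift M (shift M a))
      (card_tet a) za) ?up_Cplx //; tet_lia.
- rewrite (@setD1_eq_set3 _ _ _ (shift n1 a) (unshift n1 (shift n1 a))
      (unshift M (shift n1 a)) (card_tet a) za) ?down_Cplx //; tet_lia.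
- rewrite (@setD1_eq_set3 _ _ _ a (shift n1 a) (shift M a) (card_tet a) za) ?up_Cplx //;
    tet_lia.
Qed.

Lemma tetb_tet_Cplx a F : F \in tetb (tet a) -> F \in K.
Proof.
rewrite inE => /andP [Fa /andP [F_gt0 F_le3]].
have : [|| #|F| == 1, #|F| == 2 | #|F| == 3].
  by move: F_gt0 F_le3; case: #|F| => [|[|[|[|]]]].
case/or3P => [/cards1P [u ->] | /cards2P [u [v [uv FE]]] | /eqP F3].
- by rewrite inE; apply/or3P/Or31/existsP; exists u.
- rewrite FE in Fa *; move: Fa; rewrite subUset !sub1set => /andP [ua va].
  exact: tet_edge_Cplx ua va uv.
- exact: tet_triangle_Cplx Fa F3.
Qed.

(* The n2-edge and the down-triangle at k lie in tet (k + n2) = tet (k - n1). *)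
Lemma Cplx_tetb_tet F : F \in K -> exists a, F \in tetb (tet a).
Proof.
rewrite inE => /or3P [/existsP [k /eqP ->] | /existsP [k /or3P [] /eqP ->]
                    | /existsP [k /orP [] /eqP ->]].
- by exists k; tet_lia.
- by exists k; tet_lia.
- by exists (shift n2 k); tet_lia.
- by exists k; tet_lia.
- by exists k; tet_lia.
- by exists (unshift n1 k); tet_lia.
Qed.

Lemma n1n2_gt2 : 2 < M.
Proof. lia. Qed.

Definition walk (i : 'I_M) := i * n1 %% M.

Lemma walk_lt i : walk i < M.
Proof. by rewrite ltn_pmod //; lia. Qed.

Lemma walkS i : walk (ordS i) = (walk i + n1) %% M.
Proof. by rewrite /walk /= modnMml mulSnr modnDml. Qed.

Lemma walk_pred i : walk (ord_pred i) = (walk i + n2) %% M.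
Proof.
rewrite -{2}(ord_predK i) walkS modnDml -addnA modnDr modn_small //.
exact: walk_lt.
Qed.

Hypothesis n1_n2_coprime : coprime n1 n2.

Lemma walk_inj : injective walk.
Proof.
have cop : coprime M n1 by rewrite coprime_sym /coprime gcdnDl.
move=> i j; wlog ji : i j / j <= i.
  move=> walk_le_inj wij; case: (leqP j i) => [ji | /ltnW ij]; first exact: walk_le_inj.
  exact/esym/walk_le_inj/esym.
move=> /eqP; rewrite eqn_mod_dvd ?leq_mul2r ?ji ?orbT // -mulnBl Gauss_dvdl //.
case ij: (i - j) => [|k] => [_|/dvdn_leq // k_ge]; first by apply: val_inj => /=; lia.
by have := ltn_ord i; lia.
Qed.

Lemma walk_surj c : c < M -> exists i, walk i = c.
Proof.
move=> cM; pose w i : 'I_M := Ordinal (walk_lt i).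
have [v wv vw] := injF_bij (fun i j (ij : w i = w j) => walk_inj (congr1 val ij)).
by exists (v (Ordinal cM)); rewrite -[walk _]/(val (w _)) vw.
Qed.

Lemma tet_fibres a : tet a = fibre M (a %% M) :|: fibre M ((a + n1) %% M).
Proof.
rewrite -shift_modM !fibreE shiftD (addnA n1).
by apply/setP => x; rewrite /tet !inE -!orbA; congr (_ || _); rewrite orbCA.
Qed.

Definition tetra i := fibre M (walk i) :|: fibre M (walk (ordS i)).

Lemma tetra_tet i a : walk i = a %% M -> tetra i = tet a.
Proof. by move=> ia; rewrite tet_fibres /tetra walkS ia modnDml. Qed.

Lemma tetra_vertex i : exists a, tetra i = tet a.
Proof.
have iN : walk i < M + M by apply: ltn_addr (walk_lt i).
by exists (Ordinal iN); apply: tetra_tet; rewrite /= modn_small ?walk_lt.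
Qed.

Lemma card_tetra i : #|tetra i| = 4.
Proof. by have [a ->] := tetra_vertex i; apply: card_tet. Qed.

Lemma walk_exists a : exists i, walk i = a %% M.
Proof. by apply: walk_surj; rewrite ltn_pmod //; lia. Qed.

Lemma tetra_exists a : exists i, tetra i = tet a.
Proof. by have [i ia] := walk_exists a; exists i; apply: tetra_tet. Qed.

Lemma Cplx_tetra : K = \bigcup_(i < M) tetb (tetra i).
Proof.
apply/setP => F; apply/idP/bigcupP => [/Cplx_tetb_tet [a Fa] | [i _]].
  by have [i ia] := tetra_exists a; exists i; rewrite ?ia.
by have [a ->] := tetra_vertex i; apply: tetb_tet_Cplx.
Qed.

Lemma mem_tetra x i : (x \in tetra i) = (x %% M == walk i) || (x %% M == walk (ordS i)).
Proof. by rewrite !inE. Qed.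

Lemma walk_ordS_neq i : walk (ordS i) != walk i.
Proof. by rewrite (inj_eq walk_inj) ordS_neq // ltnW // n1n2_gt2. Qed.

Lemma tetraS_meet i : tetra i :&: tetra (ordS i) = fibre M (walk (ordS i)).
Proof.
apply/setP => x; rewrite inE !mem_tetra inE.
have := ordSS_neq i n1n2_gt2; rewrite -(inj_eq walk_inj) => walk02.
case: (x %% M =P walk (ordS i)) => [_ | _]; first by rewrite !orbT.
rewrite orbF /=; apply/negP => /andP [/eqP -> /eqP walk20].
by rewrite walk20 eqxx in walk02.
Qed.

Lemma card_tetraS_meet i : #|tetra i :&: tetra (ordS i)| = 2.
Proof. by rewrite tetraS_meet card_fibre ?walk_lt. Qed.

Lemma tetra_meet0 i j : i != j -> j != ordS i -> i != ordS j -> tetra i :&: tetra j = set0.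
Proof.
move=> ij jSi iSj; apply/setP => x; rewrite inE !mem_tetra inE.
have w_ij : walk i != walk j by rewrite (inj_eq walk_inj).
have w_Si_Sj : walk (ordS i) != walk (ordS j).
  by rewrite !(inj_eq walk_inj) (inj_eq (@ordS_inj _)).
have w_i_Sj : walk i != walk (ordS j) by rewrite (inj_eq walk_inj).
have w_Si_j : walk (ordS i) != walk j by rewrite (inj_eq walk_inj) eq_sym.
apply/negP => /andP [/orP [] /eqP -> /orP [] /eqP E];
  by move: w_ij w_Si_Sj w_i_Sj w_Si_j; rewrite E eqxx.
Qed.

Lemma tetra_meet_le2 i j : i != j -> #|tetra i :&: tetra j| <= 2.
Proof.
move=> ij; case: (eqVneq j (ordS i)) => [-> | jSi]; first by rewrite card_tetraS_meet.
case: (eqVneq i (ordS j)) => [-> | iSj]; first by rewrite setIC card_tetraS_meet.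
by rewrite tetra_meet0 ?cards0.
Qed.

Lemma tetra_meet3 i :
  (tetra (ord_pred i) :&: tetra i) :&: (tetra i :&: tetra (ordS i)) = set0.
Proof.
have := tetraS_meet (ord_pred i); rewrite ord_predK => ->.
by rewrite tetraS_meet fibreI // eq_sym walk_ordS_neq.
Qed.

Lemma tetra_triangle_unique F : F \in K -> #|F| = 3 -> exists! i, F \subset tetra i.
Proof.
rewrite Cplx_tetra => /bigcupP [i _]; rewrite inE => /andP [Fi _] F3.
exists i; split => // j Fj; apply/eqP; apply: contraT => ij.
have : #|F| <= #|tetra i :&: tetra j| by rewrite subset_leq_card // subsetI Fi.
by rewrite F3 => /leq_trans /(_ (tetra_meet_le2 ij)).
Qed.

Lemma tetra_pred_tet i a : walk i = a %% M ->
  tetra (ord_pred i) = [set a; shift n2 a; shift (n1 + n2) a; shift (n1 + n2 + n2) a].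
Proof.
move=> ia; rewrite (@tetra_tet _ (shift n2 a)).
  by apply/eqP; rewrite eqEcard; tet_lia.
by rewrite walk_pred ia modnDml shift_modM.
Qed.

Lemma tetra_edge i a : walk i = a %% M -> tetra (ord_pred i) :&: tetra i = [set a; shift M a].
Proof. by move=> ia; rewrite -{2}(ord_predK i) tetraS_meet ord_predK ia fibreE. Qed.

Lemma tetra_edge_cover i j a : walk i = a %% M ->
  [set a; shift M a] \subset tetra j -> j = i \/ j = ord_pred i.
Proof.
move=> ia /subsetP /(_ a); rewrite !inE eqxx => /(_ isT).
by rewrite -ia => /orP [] /eqP /walk_inj ->; [left | right; rewrite ordSK].
Qed.

Lemma card_tritone_triangles a :
  #|[set F in K | (#|F| == 3) && ([set a; shift M a] \subset F)]| = 4.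
Proof.
have [i ia] := walk_exists a; set e := [set a; shift M a].
have eE : tetra (ord_pred i) :&: tetra i = e := tetra_edge ia.
set A := tetra (ord_pred i) :|: tetra i.
have e2 : #|e| = 2 by rewrite cards2; shift_lia.
have eA : e \subset A by rewrite -eE subIset // subsetUl.
have eP : e \subset tetra (ord_pred i) by rewrite -eE subsetIl.
have eI : e \subset tetra i by rewrite -eE subsetIr.
have ye3 y : y \notin e -> #|y |: e| = 3 by move=> ye; rewrite cardsU1 ye e2.
have -> : [set F in K | (#|F| == 3) && (e \subset F)] = [set y |: e | y in A :\: e].
  apply/setP => F; apply/idP/imsetP.
  - rewrite inE Cplx_tetra => /andP [/bigcupP [k _] /[!inE] /andP [Fk _] /andP [/eqP F3 eF]].
    have FA : F \subset A.
      case: (tetra_edge_cover ia (subset_trans eF Fk)) => kE; rewrite kE in Fk;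
      [exact: subset_trans Fk (subsetUr _ _) | exact: subset_trans Fk (subsetUl _ _)].
    have /subsetPn [y yF ye] : ~~ (F \subset e).
      by apply/negP => /subset_leq_card; rewrite F3 e2.
    exists y; first by rewrite inE ye (subsetP FA).
    by apply/eqP; rewrite eq_sym eqEcard subUset sub1set yF eF ye3 ?F3.
  - case=> y /setDP [yA ye] ->; rewrite inE ye3 // eqxx subsetUr !andbT Cplx_tetra.
    apply/bigcupP; case/setUP: yA => yT; [exists (ord_pred i) | exists i] => //;
      by rewrite inE subUset sub1set yT ?eP ?eI ye3.
rewrite card_in_imset; last first.
  move=> y y' /setDP [_ ye] _ yy'; have := setU11 y e; rewrite yy'.
  by case/setU1P => // ye'; rewrite ye' in ye.
by rewrite cardsDS // cardsU !card_tetra eE e2.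
Qed.

End Complex.

Theorem theorem6p13 (n1 n2 : nat) (h1 : 0 < n1) (h12 : n1 < n2)
    (hcop : coprime n1 n2) :
  exists TT : 'I_(n1 + n2) -> {set 'I_(n1 + n2 + (n1 + n2))},
    @is_tetb_circle _ (Cplx n1 n2 (n1 + n2)) (n1 + n2) TT /\
    (forall a : 'I_(n1 + n2 + (n1 + n2)),
       let e := [set a; shift (n1 + n2) a] in
       #|[set F in Cplx n1 n2 (n1 + n2) | (#|F| == 3) && (e \subset F)]| = 4 /\
           (exists i j : 'I_(n1 + n2),
             [/\ i != j,
                 TT i = [set a; shift n1 a; shift (n1 + n2) a; shift (n1 + n1 + n2) a],
                 TT j = [set a; shift n2 a; shift (n1 + n2) a; shift (n1 + n2 + n2) a],
                 TT i :&: TT j = e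
               & forall k, e \subset TT k -> k = i \/ k = j])) /\
    (forall F, F \in Cplx n1 n2 (n1 + n2) -> #|F| = 3 ->
       exists! i : 'I_(n1 + n2), F \subset TT i).
Proof.
have M_gt2 := n1n2_gt2 h1 h12.
exists (@tetra n1 n2); split; [split; split | split].
- exact: M_gt2.
- exact: card_tetra.
- exact: Cplx_tetra.
- move=> i; exists (tetra i :&: tetra (ordS i)); first exact: card_tetraS_meet.
  by rewrite tetbI // card_tetraS_meet.
- exact: tetra_meet3.
- by move=> i j ij jSi iSj; rewrite tetbI_set0 // tetra_meet0.
- move=> a e; split; first exact: card_tritone_triangles.
  have [i ia] := walk_exists h1 h12 hcop a.
  exists i, (ord_pred i); split.
  + by rewrite -{1}(ord_predK i) ordS_neq // ltnW.
  + exact: tetra_tet.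
  + exact: tetra_pred_tet.
  + by rewrite setIC; apply: tetra_edge.
  + by move=> k /(tetra_edge_cover h1 h12 hcop ia).
- exact: tetra_triangle_unique.
Qed.
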